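(* Let $K$ be a field, $s\ge 2$, and $S=K[t_1,\ldots,t_s]$ with each $t_i$ of degree $1$. Let $\mathcal{L}\subset\mathbb{Z}^s$ be a lattice such that the lattice ideal $I(\mathcal{L})$ is graded (i.e. generated by homogeneous polynomials) and $\dim S/I(\mathcal{L})=1$. Then $$\deg\, S/I(\mathcal{L})=|T(\mathbb{Z}^s/\mathcal{L})|,$$ where $T(\mathbb{Z}^s/\mathcal{L})$ is the torsion subgroup of $\mathbb{Z}^s/\mathcal{L}$.
   Context: A lattice is a subgroup $\mathcal{L}$ of $\mathbb{Z}^s$. For $a\in\mathbb{Z}^s$ write $a=a^+-a^-$ with $a^+,a^-\in\mathbb{N}^s$ of disjoint supports, and $t^c=t_1^{c_1}\cdots t_s^{c_s}$ for $c\in\mathbb{N}^s$. The lattice ideal of $\mathcal{L}$ is $I(\mathcal{L})=(\{t^{a^+}-t^{a^-}: a\in\mathcal{L}\})\subset S$. The torsion subgroup $T(M)$ of an abelian group $M$ is the set of $x\in M$ with $px=0$ for some positive integer $p$. For a graded ideal $I\subset S$, with $S_d$ the homogeneous polynomials of degree $d$ (with $0$) and $I_d=I\cap S_d$, the Hilbert function is $H_I(d)=\dim_K S_d/I_d$; there is a unique polynomial $h_I(t)=c_kt^k+\cdots$ (the Hilbert polynomial, of degree $k$, with $k=-1$ meaning $h_I=0$) with $h_I(d)=H_I(d)$ for $d\gg0$; $\dim S/I=k+1$ (Krull dimension). The degree $\deg S/I$ is $c_k\,k!$ if $k\ge 0$ and $\dim_K(S/I)$ if $k=-1$. *)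

From HB Require Import structures.
From mathcomp Require Import all_boot all_order all_algebra.
From mathcomp Require Import mpoly.
Set Implicit Arguments. Unset Strict Implicit. Unset Printing Implicit Defensive.
Import Order.TTheory GRing.Theory Num.Theory.
Local Open Scope ring_scope.

Section Defs.
Variables (K : fieldType) (s : nat).

Definition zvec := 'I_s -> int.

Definition is_lattice (L : zvec -> Prop) : Prop :=
  [/\ L (fun _ => 0),
      forall a b, L a -> L b -> L (fun i => a i + b i)
    & forall a, L a -> L (fun i => - a i)].

(* a = a^+ - a^-, with disjoint supports *)
Definition pos_part (z : int) : nat :=
  match z with Posz n => n | Negz _ => 0%N end.
Definition neg_part (z : int) : nat :=
  match z with Posz _ => 0%N | Negz n => n.+1 end.

Definition mono_pos (a : zvec) : 'X_{1..s} := [multinom pos_part (a i) | i < s].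
Definition mono_neg (a : zvec) : 'X_{1..s} := [multinom neg_part (a i) | i < s].

Definition binom_of (a : zvec) : {mpoly K[s]} := 'X_[mono_pos a] - 'X_[mono_neg a].

Definition ideal_gen (G : {mpoly K[s]} -> Prop) (p : {mpoly K[s]}) : Prop :=
  exists n (q g : 'I_n -> {mpoly K[s]}),
    (forall i, G (g i)) /\ p = \sum_(i < n) q i * g i.

Definition lattice_ideal (L : zvec -> Prop) : {mpoly K[s]} -> Prop :=
  ideal_gen (fun f => exists a, L a /\ f = binom_of a).

(* homogeneous of degree d (0 is homogeneous of every degree) *)
Definition homog_deg (d : nat) (p : {mpoly K[s]}) : Prop :=
  forall m, m \in msupp p -> mdeg m = d.

Definition is_homogeneous (p : {mpoly K[s]}) : Prop := exists d, homog_deg d p.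

Definition graded_ideal (I : {mpoly K[s]} -> Prop) : Prop :=
  exists G : {mpoly K[s]} -> Prop,
    (forall g, G g -> is_homogeneous g) /\ (forall p, I p <-> ideal_gen G p).

(* there are n elements satisfying P whose classes are K-linearly
   independent in S/I, i.e. dim_K (span P + I)/I >= n *)
Definition quot_indep (I : {mpoly K[s]} -> Prop) (P : {mpoly K[s]} -> Prop)
  (n : nat) : Prop :=
  exists f : 'I_n -> {mpoly K[s]},
    (forall i, P (f i)) /\
    (forall c : 'I_n -> K, I (\sum_(i < n) c i *: f i) -> forall i, c i = 0).

(* dim_K S_d / I_d = n *)
Definition hilbert_fn (I : {mpoly K[s]} -> Prop) (d n : nat) : Prop :=
  quot_indep I (homog_deg d) n /\ ~ quot_indep I (homog_deg d) n.+1.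

(* dim_K S / I = n *)
Definition quot_dim (I : {mpoly K[s]} -> Prop) (n : nat) : Prop :=
  quot_indep I (fun _ => True) n /\ ~ quot_indep I (fun _ => True) n.+1.

Definition hilbert_poly (I : {mpoly K[s]} -> Prop) (h : {poly rat}) : Prop :=
  exists d0, forall d, (d0 <= d)%N ->
    exists n, hilbert_fn I d n /\ h.[d%:R] = n%:R.

(* Krull dimension of S/I = deg h + 1 = size h (0 if h = 0) *)
Definition krull_dim (I : {mpoly K[s]} -> Prop) (k : nat) : Prop :=
  exists h, hilbert_poly I h /\ size h = k.

Definition quot_degree (I : {mpoly K[s]} -> Prop) (e : rat) : Prop :=
  exists h, hilbert_poly I h /\
   ((0 < size h)%N /\ e = lead_coef h * ((size h).-1)`!%:R
    \/ h = 0 /\ exists n, quot_dim I n /\ e = n%:R).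

End Defs.

(* torsion subgroup of Z^s / L has exactly n elements:
   n pairwise non-congruent torsion classes exhausting all torsion classes *)
Definition is_torsion_mod (s : nat) (L : zvec s -> Prop) (x : zvec s) : Prop :=
  exists p : nat, (0 < p)%N /\ L (fun i => p%:Z * x i).

Definition congr_mod (s : nat) (L : zvec s -> Prop) (x y : zvec s) : Prop :=
  L (fun i => x i - y i).

Definition torsion_card (s : nat) (L : zvec s -> Prop) (n : nat) : Prop :=
  exists f : 'I_n -> zvec s,
    [/\ forall i, is_torsion_mod L (f i),
        forall i j, congr_mod L (f i) (f j) -> i = j
      & forall x, is_torsion_mod L x -> exists i, congr_mod L x (f i)].

From HB Require Import structures.
From mathcomp Require Import all_boot all_order all_algebra.
From mathcomp Require Import mpoly.
From mathcomp.multinomials Require Import ssrcomplements.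
From mathcomp Require Import zify.
From Stdlib Require Import Classical_Prop ClassicalEpsilon FunctionalExtensionality.
Set Implicit Arguments. Unset Strict Implicit. Unset Printing Implicit Defensive.
Import Order.TTheory GRing.Theory Num.Theory.
Local Open Scope ring_scope.

(* A polynomial lies in I(L) iff, for every coset u + L of exponent vectors, the
   sum of its coefficients over the monomials t^v with v in u + L vanishes.
   Gradedness forces every vector of L to have coordinate sum 0, so each coset
   lives in a single degree, and for large d the Hilbert function H(d) counts the
   cosets of exponents of degree d, i.e. (after a shift) the cosets modulo L of
   the hyperplane {x : sum x_i = 0}. Dimension 1 makes H eventually a constant n,
   which is the degree. A vector x of the hyperplane is torsion, since its
   multiples cannot be pairwise incongruent in finitely many cosets; conversely
   torsion vectors lie in the hyperplane because L does. So the n cosets are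
   exactly T(Z^s/L). *)

Definition asbool (P : Prop) : bool :=
  if excluded_middle_informative P then true else false.

Lemma asboolP P : reflect P (asbool P).
Proof. by rewrite /asbool; case: excluded_middle_informative => h; constructor. Qed.

Section CoefSum.
Variables (K : fieldType) (s : nat).
Implicit Types (p q : {mpoly K[s]}) (P Q : pred 'X_{1..s}).

Definition coefsum P p : K := \sum_(m <- msupp p | P m) p@_m.

Lemma coefsum_enum P p i : (msize p <= i)%N ->
  coefsum P p = \sum_(m : 'X_{1..s < i}) (if P m then p@_m else 0).
Proof.
move=> le_pi; rewrite /coefsum big_mkcond /=.
rewrite (big_mksub 'X_{1..s < i}) ?msupp_uniq //=; last first.
  by move=> x /msize_mdeg_lt /leq_trans; apply.
rewrite big_rmcond //= => m /memN_msupp_eq0 ->.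
by case: (P _).
Qed.

Fact coefsum_is_linear P : linear_for *%R (coefsum P).
Proof.
move=> c p q; set i := (msize p + msize q + msize (c *: p + q))%N.
rewrite !(@coefsum_enum _ _ i) /i; try lia.
rewrite mulr_sumr -big_split /=; apply: eq_bigr => m _.
by rewrite mcoeffD mcoeffZ; case: (P m); rewrite // mulr0 addr0.
Qed.

HB.instance Definition _ P :=
  GRing.isLinear.Build K {mpoly K[s]} K *%R (coefsum P) (coefsum_is_linear P).

Lemma coefsumZ P c p : coefsum P (c *: p) = c * coefsum P p.
Proof. exact: linearZ. Qed.

Lemma coefsumX P m : coefsum P 'X_[m] = (P m)%:R.
Proof.
by rewrite /coefsum msuppX big_cons big_nil mcoeffX eqxx; case: (P m); rewrite ?addr0.
Qed.

Lemma eq_coefsum P Q p : {in msupp p, P =1 Q} -> coefsum P p = coefsum Q p.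
Proof.
move=> eqPQ; rewrite /coefsum [LHS]big_mkcond [RHS]big_mkcond.
by apply: eq_big_seq => m /eqPQ ->.
Qed.

Lemma coefsum_pred0 P p : {in msupp p, P =1 pred0} -> coefsum P p = 0.
Proof. by move/eq_coefsum ->; rewrite /coefsum big_pred0. Qed.

Lemma coefsumXM P w p : coefsum P ('X_[w] * p) = coefsum (fun m => P (w + m)%MM) p.
Proof.
rewrite /coefsum mulrC (perm_big _ (msuppMX p w)) big_map.
by apply: eq_bigr => m _; rewrite mcoeffMX.
Qed.

End CoefSum.

Section IdealGen.
Variables (K : fieldType) (s : nat) (G : {mpoly K[s]} -> Prop).

Lemma ideal_gen0 : ideal_gen G 0.
Proof. by exists 0%N, (fun _ => 0), (fun _ => 0); split => [[]|]; rewrite ?big_ord0. Qed.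

Lemma ideal_gen_sub g : G g -> ideal_gen G g.
Proof.
move=> Gg; exists 1%N, (fun _ => 1), (fun _ => g); split => [//|].
by rewrite big_ord1 mul1r.
Qed.

Lemma ideal_genDZ c p q : ideal_gen G p -> ideal_gen G q -> ideal_gen G (c *: p + q).
Proof.
move=> [n1 [q1 [g1 [G1 ->]]]] [n2 [q2 [g2 [G2 ->]]]].
exists (n1 + n2)%N,
  (fun i => match split i with inl j => c *: q1 j | inr j => q2 j end),
  (fun i => match split i with inl j => g1 j | inr j => g2 j end).
split; first by move=> i; case: (split i).
rewrite big_split_ord /=; congr (_ + _).
  rewrite scaler_sumr; apply: eq_bigr => j _; by rewrite (unsplitK (inl j)) scalerAl.
by apply: eq_bigr => j _; rewrite (unsplitK (inr j)).
Qed.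

Lemma ideal_genMl r p : ideal_gen G p -> ideal_gen G (r * p).
Proof.
move=> [n [q [g [Gg ->]]]]; exists n, (fun i => r * q i), g; split => //.
by rewrite mulr_sumr; apply: eq_bigr => i _; rewrite mulrA.
Qed.

Lemma coefsum_ideal_gen P :
    (forall w g, G g -> coefsum P ('X_[w] * g) = 0) ->
  forall p, ideal_gen G p -> coefsum P p = 0.
Proof.
move=> PG p [n [q [g [Gg ->]]]]; rewrite raddf_sum big1 // => i _.
rewrite [q i]mpolyE mulr_suml raddf_sum big1_seq // => m _.
by rewrite -scalerAl /= coefsumZ PG ?mulr0.
Qed.

End IdealGen.

Lemma pos_partB_neg_part z : (pos_part z)%:Z - (neg_part z)%:Z = z.
Proof. by case: z => n /=; rewrite ?subr0 // sub0r NegzE. Qed.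

Lemma pos_neg_partB (x y : nat) :
  pos_part (x%:Z - y%:Z) = (x - y)%N /\ neg_part (x%:Z - y%:Z) = (y - x)%N.
Proof.
case: (leqP y x) => yx; first by rewrite subzn //; split => //=; lia.
have e : (y - x)%N = (y - x).-1.+1 by rewrite prednK // subn_gt0.
have -> : x%:Z - y%:Z = Negz (y - x).-1 by rewrite NegzE -e -opprB subzn // ltnW.
by split => /=; [lia | rewrite -e].
Qed.

Section LatticeIdeal.
Variables (K : fieldType) (s : nat) (L : zvec s -> Prop).
Hypothesis HL : is_lattice L.

Local Notation I := (lattice_ideal (K:=K) L).
Local Notation congr := (congr_mod L).

Definition expv (m : 'X_{1..s}) : zvec s := fun i => (m i)%:Z.

Definition coset (z : zvec s) : pred 'X_{1..s} := fun m => asbool (congr (expv m) z).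

Lemma mdeg_expv m : (mdeg m)%:Z = \sum_i expv m i.
Proof. by rewrite mdegE (big_morph Posz PoszD (erefl _)). Qed.

Lemma lattice_ext a b : L a -> a =1 b -> L b.
Proof. by move=> La /functional_extensionality <-. Qed.

Lemma congr_refl x : congr x x.
Proof. by case: HL => L0 _ _; apply: lattice_ext L0 _ => i; rewrite subrr. Qed.

Lemma congr_sym x y : congr x y -> congr y x.
Proof. by case: HL => _ _ LN /LN Lyx; apply: lattice_ext Lyx _ => i; rewrite opprB. Qed.

Lemma congr_trans x y z : congr x y -> congr y z -> congr x z.
Proof. by case: HL => _ LD _ xy /(LD _ _ xy) Lxz; apply: lattice_ext Lxz _ => i; rewrite addrA subrK. Qed.

Lemma cosetE z m m' : congr (expv m) (expv m') -> coset z m = coset z m'.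
Proof.
move=> mm'; apply/asboolP/asboolP => [mz | m'z].
  exact: congr_trans (congr_sym mm') mz.
exact: congr_trans mm' m'z.
Qed.

Lemma eq_coset z z' : congr z z' -> coset z =1 coset z'.
Proof.
move=> zz' m; apply/asboolP/asboolP => [mz | mz'].
  exact: congr_trans mz zz'.
exact: congr_trans mz' (congr_sym zz').
Qed.

Lemma coset_expv m : coset (expv m) m.
Proof. exact/asboolP/congr_refl. Qed.

Lemma lattice_ideal_binom a : L a -> I (binom_of K a).
Proof. by move=> La; apply: ideal_gen_sub; exists a. Qed.

Lemma lattice_ideal_mull r p : I p -> I (r * p).
Proof. exact: ideal_genMl. Qed.

(* t^u - t^v = t^w (t^{a+} - t^{a-}) with a = u - v and w = min(u, v). *)
Lemma lattice_ideal_XB m m' : congr (expv m) (expv m') -> I ('X_[m] - 'X_[m']).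
Proof.
move=> mm'; pose a i := expv m i - expv m' i.
pose w := [multinom minn (m i) (m' i) | i < s].
have -> : m = (w + mono_pos a)%MM.
  apply/mnmP => i; rewrite mnmDE !mnmE /a /expv.
  by case: (pos_neg_partB (m i) (m' i)) => -> _; lia.
have -> : m' = (w + mono_neg a)%MM.
  apply/mnmP => i; rewrite mnmDE !mnmE /a /expv.
  by case: (pos_neg_partB (m i) (m' i)) => _ ->; lia.
by rewrite !mpolyXD -mulrBr; apply/lattice_ideal_mull/lattice_ideal_binom.
Qed.

Lemma coefsum_coset_lattice_ideal z p : I p -> coefsum (coset z) p = 0.
Proof.
apply: coefsum_ideal_gen => w _ [a [La ->]].
rewrite /binom_of mulrBr -!mpolyXD raddfB /= !coefsumX.
rewrite (@cosetE _ _ (w + mono_neg a)%MM) ?subrr //.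
apply: lattice_ext La _ => i; rewrite /expv !mnmDE !mnmE !PoszD.
by rewrite opprD addrACA subrr add0r pos_partB_neg_part.
Qed.

(* Induction on the support: a monomial t^m0 of p shares its coset with another
   monomial t^m1 of p, and p - p_m0 (t^m0 - t^m1) has a smaller support. *)
Lemma lattice_ideal_coefsum0 n p : (size (msupp p) <= n)%N ->
  (forall m, coefsum (coset (expv m)) p = 0) -> I p.
Proof.
elim: n p => [|n IH] p sz_p p0.
  by move: sz_p; rewrite leqn0 size_eq0 => /eqP/msuppnil0 ->; apply: ideal_gen0.
case E: (msupp p) => [|m0 r]; first by rewrite (msuppnil0 E); apply: ideal_gen0.
have m0p : m0 \in msupp p by rewrite E mem_head.
have p_m0 : p@_m0 != 0 by rewrite -mcoeff_msupp.
have [m1 m1p /andP[m10 cm1]] : exists2 m1, m1 \in msupp p & (m1 != m0) && coset (expv m0) m1.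
  apply/hasP; apply: contraT => no_m1; move: (p0 m0).
  rewrite /coefsum big_mkcond (bigD1_seq m0) ?msupp_uniq //= coset_expv big1_seq.
    by rewrite addr0 => /eqP; rewrite (negbTE p_m0).
  move=> m /andP[mm0 mp]; case cm: (coset _ m) => //.
  by case/hasP: no_m1; exists m => //; rewrite mm0 cm.
have m1m0 : congr (expv m1) (expv m0) by apply/asboolP.
set c := p@_m0; set q := p - c *: ('X_[m0] - 'X_[m1]).
have -> : p = c *: ('X_[m0] - 'X_[m1]) + q by rewrite /q addrC subrK.
apply: ideal_genDZ; first exact/lattice_ideal_XB/congr_sym.
apply: IH => [|m]; last first.
  rewrite raddfB /= coefsumZ raddfB /= !coefsumX (cosetE _ (congr_sym m1m0)).
  by rewrite subrr mulr0 subr0 p0.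
have supp_q : {subset msupp q <= rem m0 (msupp p)}.
  move=> m mq; rewrite mem_rem_uniq ?msupp_uniq // inE; apply/andP; split.
    apply: contraTneq mq => ->; rewrite mcoeff_msupp /q mcoeffB mcoeffZ mcoeffB.
    by rewrite !mcoeffX eqxx (negbTE m10) subr0 mulr1 subrr eqxx.
  move/msuppB_le: mq; rewrite mem_cat => /orP[//|/msuppZ_le/msuppB_le].
  by rewrite mem_cat !msuppX !mem_seq1 => /orP[]/eqP->.
have := uniq_leq_size (msupp_uniq q) supp_q.
by rewrite size_rem // E /= => /leq_trans; apply; rewrite E in sz_p.
Qed.

Lemma lattice_idealP p : I p <-> forall m, coefsum (coset (expv m)) p = 0.
Proof.
split=> [Ip m | ]; first exact: coefsum_coset_lattice_ideal.
exact: lattice_ideal_coefsum0 (leqnn _).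
Qed.

Lemma quot_indep_monomials d k (u : 'I_k -> 'X_{1..s}) :
    (forall j, mdeg (u j) = d) -> (forall j l, congr (expv (u j)) (expv (u l)) -> j = l) ->
  quot_indep I (homog_deg d) k.
Proof.
move=> du u_inj; exists (fun j => 'X_[u j]); split.
  by move=> j m; rewrite msuppX mem_seq1 => /eqP ->.
move=> c /lattice_idealP /(_ (u _)) cl l; move: (cl l).
rewrite raddf_sum (bigD1 l) //= big1 => [|j jl].
  by rewrite coefsumZ coefsumX coset_expv mulr1 addr0.
rewrite coefsumZ coefsumX /coset; case: asboolP => [/u_inj lj | _]; last by rewrite mulr0.
by rewrite lj eqxx in jl.
Qed.

Hypothesis graded : graded_ideal I.

(* It suffices to check the products t^w g with g a homogeneous generator, on
   whose support the degree condition is constant. *)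
Lemma coefsum_coset_mdeg_lattice_ideal z e p : I p ->
  coefsum (fun m => coset z m && (mdeg m == e)) p = 0.
Proof.
case: graded => G [Ghom GI] /GI; apply: coefsum_ideal_gen => w g Gg.
have [dg g_dg] := Ghom g Gg.
rewrite coefsumXM (@eq_coefsum _ _ _ (fun m => coset z (w + m)%MM && (mdeg w + dg == e)%N));
  last by move=> m /g_dg gm; rewrite mdegD gm.
case: (mdeg w + dg == e)%N; last by apply: coefsum_pred0 => m _; rewrite andbF.
rewrite (@eq_coefsum _ _ _ (fun m => coset z (w + m)%MM)) => [|m _]; last by rewrite andbT.
by rewrite -coefsumXM coefsum_coset_lattice_ideal //; apply/lattice_ideal_mull/GI/ideal_gen_sub.
Qed.

(* On t^{a+} - t^{a-} the coset sum in degree |a+| is 1 - [|a-| == |a+|]. *)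
Lemma lattice_sum0 a : L a -> \sum_i a i = 0.
Proof.
move=> La; have := coefsum_coset_mdeg_lattice_ideal (expv (mono_pos a))
  (mdeg (mono_pos a)) (lattice_ideal_binom La).
rewrite /binom_of raddfB /= !coefsumX coset_expv eqxx.
have -> : coset (expv (mono_pos a)) (mono_neg a).
  apply/asboolP; case: HL => _ _ LN; apply: lattice_ext (LN _ La) _ => i.
  by rewrite /expv !mnmE -opprB pos_partB_neg_part.
case: eqP => /= [deg_eq _ | _]; last by rewrite subr0 => /eqP; rewrite oner_eq0.
have : (mdeg (mono_pos a))%:Z - (mdeg (mono_neg a))%:Z = 0 by rewrite deg_eq subrr.
rewrite !mdeg_expv -sumrB => sum0; rewrite -[RHS]sum0; apply: eq_bigr => i _.
by rewrite /expv !mnmE pos_partB_neg_part.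
Qed.

Lemma congr_mdeg m m' : congr (expv m) (expv m') -> mdeg m = mdeg m'.
Proof. by move/lattice_sum0/eqP; rewrite sumrB -!mdeg_expv subr_eq0 => /eqP []. Qed.

Lemma coefsum_coset_homog d (p : {mpoly K[s]}) m0 :
  homog_deg d p -> mdeg m0 != d -> coefsum (coset (expv m0)) p = 0.
Proof.
move=> hp m0d; apply: coefsum_pred0 => m /hp md /=.
by apply: contraNF m0d => /asboolP /congr_mdeg <-; rewrite md.
Qed.

Lemma torsion_mod_sum0 x : is_torsion_mod L x -> \sum_i x i = 0.
Proof.
move=> [p [p_gt0 /lattice_sum0]]; rewrite -mulr_sumr => /eqP.
by rewrite mulf_eq0 eqz_nat eqn0Ngt p_gt0 => /eqP.
Qed.

End LatticeIdeal.

Section QuotIndep.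
Variables (K : fieldType) (s : nat) (I P : {mpoly K[s]} -> Prop).

Lemma quot_indep_leq n k : quot_indep I P n -> (k <= n)%N -> quot_indep I P k.
Proof.
case: k => [|k] indep_n k_le_n.
  by exists (fun _ => 0); split => [[]|c _ []].
case: n indep_n k_le_n => // n [f [Pf f_indep]] k_le_n.
exists (fun i : 'I_k.+1 => f (inord i)); split => [i0|c Ic i0]; first exact: Pf.
pose c' j := if (j < k.+1)%N then c (inord j) else 0.
have E : \sum_(j < n.+1) c' j *: f j = \sum_(i < k.+1) c i *: f (inord i).
  rewrite [RHS](eq_bigr (fun i : 'I_k.+1 => c (inord i) *: f (inord i))); last first.
    by move=> i _; rewrite inord_val.
  rewrite (big_ord_widen _ (fun i => c (inord i) *: f (inord i)) k_le_n) [RHS]big_mkcond /=.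
  by apply: eq_bigr => j _; rewrite /c' inord_val; case: ifP => _; rewrite ?scale0r.
have := f_indep c' _ (inord i0); rewrite E => /(_ Ic).
by rewrite /c' inordK ?(leq_trans (ltn_ord i0) k_le_n) // ltn_ord inord_val.
Qed.

Lemma quot_indep_le n k : quot_indep I P k -> ~ quot_indep I P n.+1 -> (k <= n)%N.
Proof.
by move=> indep_k not_indep; rewrite leqNgt; apply/negP => /(quot_indep_leq indep_k).
Qed.

Lemma krull_dim1_hilbert_fn : krull_dim I 1 ->
  exists n d0, (forall d, (d0 <= d)%N -> hilbert_fn I d n) /\ quot_degree I n%:R.
Proof.
case=> h [[d0 h_hilb] size_h].
have hE x : h.[x] = h`_0.
  by rewrite [in LHS](@size1_polyC _ h) ?size_h // hornerC.
have [n [hilb_n h_n]] := h_hilb d0 (leqnn d0).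
exists n, d0; split => [d d0_le_d | ].
  have [n' [hilb_n' h_n']] := h_hilb d d0_le_d.
  suff -> : n = n' by [].
  by apply/eqP; rewrite -(eqr_nat rat) -h_n -h_n' !hE.
exists h; split; first by exists d0.
by left; rewrite size_h lead_coefE size_h /= mulr1 -h_n hE.
Qed.

End QuotIndep.

Lemma row_dependent (K : fieldType) k (A : 'M[K]_(k.+1, k)) :
  exists2 v : 'rV_k.+1, v != 0 & v *m A = 0.
Proof.
apply: NNPP => no_v.
have : row_free A.
  apply: inj_row_free => v vA; apply: NNPP => /eqP v_neq0.
  by apply: no_v; exists v.
by rewrite /row_free => /eqP rkA; have := rank_leq_col A; rewrite rkA ltnn.
Qed.

Section IncongruentFamilies.
Variables (s : nat) (L : zvec s -> Prop).
Hypothesis HL : is_lattice L.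

Definition incongruent_sum0 k (y : 'I_k -> zvec s) : Prop :=
  (forall j, \sum_i y j i = 0) /\ (forall j l, congr_mod L (y j) (y l) -> j = l).

Lemma incongruent_sum0_extend k (y : 'I_k -> zvec s) x :
    incongruent_sum0 y -> \sum_i x i = 0 -> (forall j, ~ congr_mod L x (y j)) ->
  incongruent_sum0 (fun j : 'I_k.+1 => if unlift ord_max j is Some j' then y j' else x).
Proof.
move=> [y_sum0 y_inj] x_sum0 x_new; split.
  by move=> j; case: (unliftP ord_max j).
move=> j l; case: (unliftP ord_max j) => [j' ->|->]; case: (unliftP ord_max l) => [l' ->|->] //.
- by move/y_inj ->.
- by move/(congr_sym HL)/x_new.
- by move/x_new.
Qed.

Lemma mdeg_congr_cover k (y : 'I_k -> zvec s) (t0 : 'I_s) d m :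
    (forall x, \sum_i x i = 0 -> exists j, congr_mod L x (y j)) -> mdeg m = d ->
  exists j, congr_mod L (expv m) (fun t => y j t + (t == t0)%:R * d%:Z).
Proof.
move=> y_cover deg_m.
have [j xj] : exists j, congr_mod L (fun t => expv m t - (t == t0)%:R * d%:Z) (y j).
  apply: y_cover; rewrite sumrB -mdeg_expv deg_m (bigD1 t0) //= eqxx mul1r big1 ?addr0 ?subrr //.
  by move=> t /negbTE ->; rewrite mul0r.
by exists j; apply: (lattice_ext (L:=L) xj) => t; rewrite opprD addrA addrAC.
Qed.

End IncongruentFamilies.

Section HilbertTorsion.
Variables (K : fieldType) (s : nat) (L : zvec s -> Prop).
Hypotheses (HL : is_lattice L) (graded : graded_ideal (lattice_ideal (K:=K) L)).
Hypothesis s_gt0 : (0 < s)%N.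
Variables (n d0 : nat).
Hypothesis hilbert_n : forall d, (d0 <= d)%N -> hilbert_fn (lattice_ideal (K:=K) L) d n.

(* Shift the vectors by a large constant c into monomials of degree s c >= d0. *)
Lemma incongruent_sum0_le k (x : 'I_k -> zvec s) : incongruent_sum0 L x -> (k <= n)%N.
Proof.
move=> [x_sum0 x_inj].
pose c := (\max_(j < k) \max_(i < s) `|x j i| + d0)%N.
have x_le j i : (`|x j i| <= c - d0)%N.
  rewrite addnK; apply: leq_trans (leq_bigmax j); exact: (leq_bigmax i).
pose u j : 'X_{1..s} := [multinom absz (x j i + c%:Z)%R | i < s].
have expv_u j i : expv (u j) i = x j i + c%:Z.
  by rewrite /expv mnmE; have := x_le j i; lia.
have deg_u j : mdeg (u j) = (s * c)%N.
  apply/eqP; rewrite -eqz_nat mdeg_expv (eq_bigr _ (fun i _ => expv_u j i)).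
  by rewrite big_split /= x_sum0 add0r sumr_const card_ord -mulr_natr natz -PoszM mulnC.
have /quot_indep_le : quot_indep (lattice_ideal (K:=K) L) (homog_deg (s * c)) k.
  apply: (quot_indep_monomials K HL deg_u) => j l ujl; apply: x_inj.
  by apply: (lattice_ext (L:=L) ujl) => i; rewrite !expv_u opprD addrACA subrr addr0.
by apply; case: (hilbert_n (d := (s * c)%N)) => //; rewrite /c; nia.
Qed.

(* Otherwise the multiples of x would be pairwise incongruent. *)
Lemma sum0_torsion_mod x : \sum_i x i = 0 -> is_torsion_mod L x.
Proof.
move=> x_sum0; apply: NNPP => x_free.
suff : (n.+1 <= n)%N by rewrite ltnn.
apply: (@incongruent_sum0_le _ (fun (j : 'I_n.+1) t => j%:Z * x t)); split.
  by move=> j; rewrite -mulr_sumr x_sum0 mulr0.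
have lt_incongr (j l : 'I_n.+1) : (j < l)%N -> ~ congr_mod L (fun t => l%:Z * x t) (fun t => j%:Z * x t).
  move=> jl lj; apply: x_free; exists (l - j)%N; split; first by rewrite subn_gt0.
  by apply: (lattice_ext (L:=L) lj) => t; rewrite -mulrBl subzn // ltnW.
move=> j l jl; case: (ltngtP j l) => [j_lt_l | l_lt_j | /val_inj //].
- by case: (lt_incongr _ _ j_lt_l (congr_sym HL jl)).
- by case: (lt_incongr _ _ l_lt_j jl).
Qed.

(* Otherwise n independent forms of degree d0 would be separated by fewer than
   n coset sums, the cosets of degree-d0 monomials being those of the y j + d0 e_t0. *)
Lemma sum0_cover_ge k (y : 'I_k -> zvec s) :
  (forall x, \sum_i x i = 0 -> exists j, congr_mod L x (y j)) -> (n <= k)%N.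
Proof.
move=> y_cover; rewrite leqNgt; apply/negP => k_lt_n.
have [f [f_homog f_indep]] := quot_indep_leq (proj1 (hilbert_n (leqnn d0))) k_lt_n.
pose t0 : 'I_s := Ordinal s_gt0.
pose z j : zvec s := fun t => y j t + (t == t0)%:R * d0%:Z.
pose A : 'M[K]_(k.+1, k) := \matrix_(i, j) coefsum (coset L (z j)) (f i).
have [v /negP v_neq0 vA] := row_dependent A; apply: v_neq0.
suff /f_indep v0 : lattice_ideal L (\sum_i v 0 i *: f i) by apply/eqP/rowP => i; rewrite mxE v0.
apply/(lattice_idealP HL) => m; rewrite raddf_sum.
under eq_bigr do rewrite /= coefsumZ.
have [deg_m | m_d0] := eqVneq (mdeg m) d0; last first.
  by rewrite big1 // => i _; rewrite (coefsum_coset_homog HL graded (f_homog i)) ?mulr0.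
have [j mj] := mdeg_congr_cover t0 y_cover deg_m.
transitivity ((v *m A) 0 j); last by rewrite vA mxE.
rewrite mxE; apply: eq_bigr => i _; rewrite mxE; congr (_ * _).
by apply: eq_coefsum => m' _; apply: (eq_coset HL).
Qed.

Lemma torsion_card_hilbert : torsion_card L n.
Proof.
pose P k := asbool (exists y : 'I_k -> zvec s, incongruent_sum0 L y).
have P0 : exists k, P k.
  by exists 0%N; apply/asboolP; exists (fun _ _ => 0); split => -[].
have P_le k : P k -> (k <= n)%N by move=> /asboolP [y]; apply: incongruent_sum0_le.
have [k /asboolP [y y_incongr] k_max] := ex_maxnP P0 P_le.
have y_cover x : \sum_i x i = 0 -> exists j, congr_mod L x (y j).
  move=> x_sum0; apply: NNPP => x_new.
  have : P k.+1.
    apply/asboolP; eexists; apply: (incongruent_sum0_extend HL y_incongr x_sum0).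
    by move=> j xj; apply: x_new; exists j.
  by move/k_max; rewrite ltnn.
have <- : k = n by apply/eqP; rewrite eqn_leq P_le ?(sum0_cover_ge y_cover) //; apply/asboolP; exists y.
exists y; case: y_incongr => y_sum0 y_inj; split=> // [j | x /(torsion_mod_sum0 HL graded)].
  exact: sum0_torsion_mod.
exact: y_cover.
Qed.

End HilbertTorsion.

Theorem theorem3p13 (K : fieldType) (s : nat) (hs : (2 <= s)%N)
  (L : zvec s -> Prop) (HL : is_lattice L)
  (Hgr : graded_ideal (lattice_ideal (K:=K) L))
  (Hdim : krull_dim (lattice_ideal (K:=K) L) 1) :
  exists n : nat, torsion_card L n /\ quot_degree (lattice_ideal (K:=K) L) n%:R.
Proof.
have [n [d0 [hilbert_n deg_n]]] := krull_dim1_hilbert_fn Hdim.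
by exists n; split=> //; exact: (torsion_card_hilbert HL Hgr (ltnW hs) hilbert_n).
Qed.
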